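(* For an integer $k\ge 1$ let $\ell(k)=s+1$, where $s\ge 0$ is the exponent of $2$ in the prime factorization of $k$ (so $k/2^s$ is odd), and let $r_k=\sum_{i=1}^k \ell(i)$ (so $r_1=1$ and $r_k=r_{k-1}+\ell(k)$). Then for every integer $m\ge 1$ the set $\{r_n: n\in\mathbb{N},\ \ell(n)=m\}$ has strictly positive lower density in $\mathbb{N}$, i.e. $\liminf_{N\to\infty}\frac{1}{N}\,\bigl|\{r_n: \ell(n)=m\}\cap\{1,\dots,N\}\bigr|>0$. *)

From mathcomp Require Import all_boot.
Set Implicit Arguments. Unset Strict Implicit. Unset Printing Implicit Defensive.

Definition ell (k : nat) : nat := (logn 2 k).+1.

Definition r (k : nat) : nat := \sum_(1 <= i < k.+1) ell i.

(* membership of x in the set { r_n : n >= 1, ell n = m }.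
   Since r n >= n, any witness n satisfies n <= x, so the search is bounded
   (the bound is exact, not a restriction). *)
Definition inRset (m x : nat) : bool :=
  [exists n : 'I_x.+1, (0 < (n : nat)) && (ell n == m) && (r n == x)].

Definition countR (m N : nat) : nat := \sum_(1 <= x < N.+1) inRset m x.

(* Since ell >= 1, the sequence r is strictly increasing with n <= r n, and
   r (2n) = 2n + r n gives r n <= 2n.  So the n <= N/2 with ell n = m yield
   distinct elements of the set below N, and among 1, ..., 2^m J there are at
   least J of them, namely the 2^(m-1) (2j+1) with j < J.  Hence the set has
   at least N / 2^(m+1) - 1 elements in {1, ..., N}. *)

From mathcomp Require Import all_boot.
From mathcomp Require Import zify.

Lemma leq_sum_nat_prefix (F : nat -> nat) (a N M : nat) : N <= M ->
  \sum_(a <= i < N) F i <= \sum_(a <= i < M) F i.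
Proof.
move=> leNM; have [leaN | ltNa] := leqP a N; last by rewrite big_geq // ltnW.
by rewrite [X in _ <= X](big_cat_nat leaN leNM) leq_addr.
Qed.

Lemma ell_odd (k : nat) : ell k.*2.+1 = 1.
Proof. by rewrite /ell logn_coprime // coprime2n /= odd_double. Qed.

Lemma ell_double (k : nat) : 0 < k -> ell k.*2 = (ell k).+1.
Proof. by move=> k_gt0; rewrite /ell -muln2 mulnC lognM //. Qed.

Lemma ell_pow2_odd (s j : nat) : ell (2 ^ s * j.*2.+1) = s.+1.
Proof.
by rewrite /ell lognM ?expn_gt0 // pfactorK // logn_coprime ?addn0 // coprime2n /= odd_double.
Qed.

Lemma r0 : r 0 = 0.
Proof. by rewrite /r big_geq. Qed.

Lemma rS (n : nat) : r n.+1 = r n + ell n.+1.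
Proof. by rewrite /r big_nat_recr. Qed.

Lemma r_double (n : nat) : r n.*2 = n.*2 + r n.
Proof.
elim: n => [|n IHn]; first by rewrite r0.
rewrite doubleS !rS IHn ell_odd -doubleS ell_double //; lia.
Qed.

Lemma r_double_odd (n : nat) : r n.*2.+1 = (n.*2 + r n).+1.
Proof. by rewrite rS ell_odd r_double addn1. Qed.

Lemma leq_r (n : nat) : n <= r n.
Proof. by elim: n => [|n IHn] //; rewrite rS /ell; lia. Qed.

Lemma r_leq_double (n : nat) : r n <= n.*2.
Proof.
elim/ltn_ind: n => n IHn; case: (posnP n) => [->|n_gt0]; first by rewrite r0.
have lt_half : n./2 < n by rewrite ltn_half_double -muln2 ltn_Pmulr.
have := IHn _ lt_half; move: (odd_double_half n) => {IHn lt_half}.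
by case: (odd n) (n./2) => h <-; rewrite /= ?add0n ?add1n ?r_double_odd ?r_double; lia.
Qed.

Lemma inRset_r (n : nat) : 0 < n -> inRset (ell n) (r n).
Proof.
move=> n_gt0; have lt_n : n < (r n).+1 by rewrite ltnS leq_r.
by apply/existsP; exists (Ordinal lt_n); rewrite /= n_gt0 !eqxx.
Qed.

Lemma countRS (m N : nat) : countR m N.+1 = countR m N + inRset m N.+1.
Proof. by rewrite /countR big_nat_recr. Qed.

Lemma countR_mono (m : nat) : {homo countR m : N M / N <= M}.
Proof. by move=> N M leNM; rewrite /countR leq_sum_nat_prefix. Qed.

Definition count_ell (m n : nat) : nat := \sum_(1 <= i < n.+1) (ell i == m).

Lemma count_ellS (m n : nat) :
  count_ell m n.+1 = count_ell m n + (ell n.+1 == m).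
Proof. by rewrite /count_ell big_nat_recr. Qed.

Lemma count_ell_mono (m : nat) : {homo count_ell m : N M / N <= M}.
Proof. by move=> N M leNM; rewrite /count_ell leq_sum_nat_prefix. Qed.

(* r is strictly increasing, so each n counted on the left gives its own r n. *)
Lemma count_ell_leq_countR (m n : nat) : count_ell m n <= countR m (r n).
Proof.
elim: n => [|n IHn]; first by rewrite /count_ell big_geq.
have def_r : r n.+1 = (r n + logn 2 n.+1).+1 by rewrite rS /ell addnS.
have := @countR_mono m _ _ (leq_addr (logn 2 n.+1) (r n)).
rewrite count_ellS def_r countRS -def_r; move: IHn; case: eqP => [<-|_]; last by lia.
by rewrite inRset_r //; lia.
Qed.

Lemma count_ell_pow2 (s J : nat) : J <= count_ell s.+1 (2 ^ s.+1 * J).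
Proof.
elim: J => [|J IHJ] //.
have pow_gt0 : 0 < 2 ^ s by rewrite expn_gt0.
set k := 2 ^ s * J.*2.+1.
have lt_k : 2 ^ s.+1 * J < k by rewrite /k expnS; nia.
have le_k : k <= 2 ^ s.+1 * J.+1 by rewrite /k expnS; nia.
have k_gt0 : 0 < k by apply: leq_ltn_trans lt_k.
apply: leq_trans (count_ell_mono _ _ _ le_k).
rewrite -(prednK k_gt0) count_ellS prednK // ell_pow2_odd eqxx addn1 ltnS.
by apply: leq_trans IHJ (count_ell_mono _ _ _ _); rewrite -ltnS prednK.
Qed.

Lemma countR_lower_bound (s N : nat) : N %/ 2 ^ s.+2 <= countR s.+1 N.
Proof.
set t := N %/ 2 ^ s.+2.
have le_rt : r (2 ^ s.+1 * t) <= N.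
  apply: leq_trans (r_leq_double _) _.
  by rewrite -muln2 mulnAC -expnSr mulnC leq_divM.
apply: leq_trans (count_ell_pow2 s t) _.
exact: leq_trans (count_ell_leq_countR _ _) (countR_mono _ _ _ le_rt).
Qed.

Theorem lemma3p4 (m : nat) : 1 <= m ->
  exists a b N0 : nat, [/\ 0 < a, 0 < b &
    forall N : nat, N0 <= N -> a * N <= b * countR m N].
Proof.
case: m => // s _; set d := 2 ^ s.+2.
have d_gt0 : 0 < d by rewrite expn_gt0.
exists 1, d.*2, d; split => //; first by rewrite double_gt0.
move=> N le_dN; have := countR_lower_bound s N; rewrite -/d.
have t_gt0 : 0 < N %/ d by rewrite divn_gt0.
have := ltn_ceil N d_gt0; nia.
Qed.
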